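(* For every prime power $q>2$ there is no linear $(q-1,q+1,q)$-AONT, i.e. no invertible $(q+1)\times(q+1)$ matrix over $\mathbb{F}_q$ all of whose $(q-1)\times(q-1)$ submatrices are invertible.
   Context: A linear $(t,s,q)$-AONT over $\mathbb{F}_q$ is given by an invertible $s\times s$ matrix $M$ over $\mathbb{F}_q$ (transform $(y_1,\dots,y_s)=(x_1,\dots,x_s)M^{-1}$); $M$ defines a linear $(t,s,q)$-AONT iff every $t\times t$ submatrix of $M$ is invertible. *)

From mathcomp Require Import all_boot all_order all_algebra all_field.
Set Implicit Arguments. Unset Strict Implicit. Unset Printing Implicit Defensive.
Import GRing.Theory.
Local Open Scope ring_scope.

Definition submx_of (F : fieldType) (s t : nat) (M : 'M[F]_s)
  (R C : {set 'I_s}) (hR : #|R| = t) (hC : #|C| = t) : 'M[F]_t :=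
  \matrix_(i < t, j < t)
     M (enum_val (cast_ord (esym hR) i)) (enum_val (cast_ord (esym hC) j)).

Definition linear_AONT (F : fieldType) (t s : nat) (M : 'M[F]_s) : Prop :=
  M \in unitmx /\
  forall (R C : {set 'I_s}) (hR : #|R| = t) (hC : #|C| = t),
    submx_of M hR hC \in unitmx.

(** A linear AONT M and its inverse are dual: a singular u x u submatrix of
    M^-1 produces a nonzero row vector x supported on s - u coordinates with
    xM vanishing on s - u coordinates, i.e. a singular (s - u) x (s - u)
    submatrix of M.  So M^-1 would be an invertible (q+1) x (q+1) matrix N
    over F_q all of whose 2 x 2 minors are nonzero.  Then every row of N has
    at most one zero, the ratios k |-> N_ik / N_0k are injective on the q
    columns where N_0k <> 0, hence run through all of F_q, and the vector
    w_k = N_0k^-1 satisfies (Nw)_0 = q = 0 and (Nw)_i = sum_(x in F_q) x = 0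
    for q > 2: N is singular. *)

From mathcomp Require Import all_boot all_order all_algebra all_field.
From mathcomp Require Import fingroup cyclic zify.
Set Implicit Arguments. Unset Strict Implicit. Unset Printing Implicit Defensive.
Import GRing.Theory FinRing.Theory.
Local Open Scope ring_scope.

Section SubmatrixDuality.

Variable F : fieldType.

Definition zero_on n (x : 'rV[F]_n) (A : {set 'I_n}) :=
  forall i, i \in A -> x 0 i = 0.

Lemma sum_zero_onC n (x : 'rV[F]_n) (R : {set 'I_n}) (a : 'I_n -> F) :
  zero_on x (~: R) ->
  \sum_r x 0 r * a r = \sum_(i < #|R|) x 0 (enum_val i) * a (enum_val i).
Proof.
move=> x0; rewrite -(big_enum_val (fun r => x 0 r * a r)) [RHS]big_mkcond.
by apply: eq_bigr => r _; case: ifPn => // rNR; rewrite x0 ?mul0r ?inE.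
Qed.

Lemma submx_of_unitP s t (M : 'M[F]_s) (R C : {set 'I_s})
    (hR : #|R| = t) (hC : #|C| = t) :
  submx_of M hR hC \in unitmx <->
  (forall x : 'rV_s, zero_on x (~: R) -> zero_on (x *m M) C -> x = 0).
Proof.
subst t; set S := submx_of M _ hC.
set g := fun j => enum_val (cast_ord (esym hC) j).
have SE i j : S i j = M (enum_val i) (g j) by rewrite mxE cast_ord_id.
split=> [Su x x0 xM0 | Sinj].
  pose xR : 'rV_#|R| := \row_i x 0 (enum_val i).
  have xRS : xR *m S = 0.
    apply/rowP => j; rewrite !mxE -[RHS](xM0 (g j)) ?enum_valP //.
    by rewrite mxE (sum_zero_onC _ x0); apply: eq_bigr => i _; rewrite SE mxE.
  have xR0 : xR = 0 by rewrite -(mulmxK Su xR) xRS mul0mx.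
  apply/rowP => r; rewrite mxE; have [rR | rNR] := boolP (r \in R).
    have := congr1 (fun y : 'rV_#|R| => y 0 (enum_rank_in rR r)) xR0.
    by rewrite !mxE enum_rankK_in.
  by apply: x0; rewrite inE.
rewrite unitmxE unitfE; apply/det0P => -[v v0 vS].
pose y := v *m rowsub enum_val 1%:M.
have yE r : y 0 r = \sum_i v 0 i * (enum_val i == r)%:R.
  by rewrite !mxE; apply: eq_bigr => i _; rewrite !mxE.
have yv i : y 0 (enum_val i) = v 0 i.
  rewrite yE (bigD1 i) //= eqxx mulr1 big1 ?addr0 // => i' /negbTE ne.
  by rewrite (inj_eq enum_val_inj) ne mulr0.
apply/negP: v0; rewrite negbK; apply/eqP/rowP => i.
rewrite -yv (Sinj y) ?mxE // => [r | c cC].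
  rewrite inE => rNR; rewrite yE big1 // => i' _.
  by case: eqP => [eri | _]; [move: rNR; rewrite -eri enum_valP | rewrite mulr0].
have -> : c = g (cast_ord hC (enum_rank_in cC c)).
  by rewrite /g cast_ordK enum_rankK_in.
rewrite -mulmxA mul_rowsub_mx mul1mx.
transitivity ((v *m S) 0 (cast_ord hC (enum_rank_in cC c))); last first.
  by rewrite vS mxE.
by rewrite !mxE; apply: eq_bigr => k _; rewrite SE !mxE.
Qed.

Lemma linear_AONT_invmx s t u (M : 'M[F]_s) :
  (t + u)%N = s -> linear_AONT t M -> linear_AONT u (invmx M).
Proof.
move=> tus [Mu AM]; split=> [|R C hR hC]; first by rewrite unitmx_inv.
have cardC (A : {set 'I_s}) : #|A| = u -> #|~: A| = t.
  by move=> hA; apply/eqP; rewrite -(eqn_add2r u) tus -hA addnC cardsC card_ord.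
apply/submx_of_unitP => y y0 yN0.
have x0 : y *m invmx M = 0.
  apply: (submx_of_unitP M (cardC _ hC) (cardC _ hR)).1; first exact: AM.
    by move=> c; rewrite setCK; exact: yN0.
  by rewrite mulmxKV.
by rewrite -(mulmxKV Mu y) x0 mul0mx.
Qed.

Lemma det_mx22 (A : 'M[F]_2) : \det A = A 0 0 * A 1 1 - A 0 1 * A 1 0.
Proof.
rewrite (expand_det_row _ 0) !big_ord_recl big_ord0 /cofactor !det_mx11 !mxE /=.
rewrite expr0 expr1 !mul1r addr0 mulN1r mulrN.
by congr (_ * A _ _ - A _ _ * A _ _); apply: val_inj.
Qed.

Lemma linear_AONT2_minor s (N : 'M[F]_s) :
  linear_AONT 2 N ->
  forall i j k l, i != j -> k != l -> N i k * N j l != N i l * N j k.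
Proof.
move=> [_ AN] i j k l ij kl; apply/negP => /eqP minor0.
pose A : 'M_2 := \matrix_(a, b) N (if a == 0 then i else j) (if b == 0 then k else l).
have /det0P[v v0 vA] : \det A == 0 by rewrite det_mx22 !mxE /= minor0 subrr.
have vAE b : (v *m A) 0 b = v 0 0 * A 0 b + v 0 1 * A 1 b.
  rewrite mxE !big_ord_recl big_ord0 addr0.
  by congr (v 0 _ * A _ b + v 0 _ * A _ b); apply: val_inj.
pose y : 'rV_s := v 0 0 *: delta_mx 0 i + v 0 1 *: delta_mx 0 j.
have yE r : y 0 r = v 0 0 * (r == i)%:R + v 0 1 * (r == j)%:R by rewrite !mxE.
have yN c : (y *m N) 0 c = v 0 0 * N i c + v 0 1 * N j c.
  by rewrite mulmxDl -!scalemxAl -!rowE !mxE.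
have card2 (a b : 'I_s) : a != b -> #|[set a; b]| = 2%N.
  by move=> ab; rewrite cards2 ab.
have y0 : y = 0.
  apply: (submx_of_unitP N (card2 _ _ ij) (card2 _ _ kl)).1; first exact: AN.
    move=> r; rewrite !inE negb_or => /andP[ri rj].
    by rewrite yE (negbTE ri) (negbTE rj) !mulr0 addr0.
  move=> c; rewrite !inE yN => /orP[] /eqP ->.
    by have := vAE 0; rewrite vA !mxE.
  by have := vAE 1; rewrite vA !mxE.
have yi : y 0 i = v 0 0 by rewrite yE eqxx (negbTE ij) mulr1 mulr0 addr0.
have yj : y 0 j = v 0 1 by rewrite yE eqxx eq_sym (negbTE ij) mulr1 mulr0 add0r.
apply/negP: v0; rewrite negbK; apply/eqP/rowP => b; rewrite mxE.
have [-> | ->] : b = 0 \/ b = 1.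
  by case: b => -[|[|//]] b; [left | right]; apply: val_inj.
- by rewrite -yi y0 mxE.
- by rewrite -yj y0 mxE.
Qed.

End SubmatrixDuality.

Lemma natr_card_eq0 (R : finNzRingType) : (#|R|%:R : R) = 0.
Proof. by rewrite -cardsT -zmodXgE expg_cardG ?inE. Qed.

Lemma sum_finField_eq0 (F : finFieldType) : (2 < #|F|)%N -> \sum_(x : F) x = 0.
Proof.
move=> hF; have /subsetPn[c _] : ~~ ([set: F] \subset [set 0; 1]).
  apply: contraL hF => /subset_leq_card; rewrite cardsT cards2 -leqNgt => h.
  by apply: leq_trans h _; case: (_ != _).
rewrite !inE negb_or => /andP[c0 c1].
have /eqP : \sum_(x : F) x = c * \sum_(x : F) x.
  by rewrite mulr_sumr; exact: (reindex_inj (mulfI c0)).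
rewrite -subr_eq0 -{1}(mul1r (\sum_x x)) -mulrBl mulf_eq0 subr_eq0.
by rewrite eq_sym (negbTE c1) => /eqP.
Qed.

Lemma sum_in_inj_card (T : finType) (V : finNmodType) (K : {set T}) (f : T -> V) :
  {in K &, injective f} -> #|K| = #|V| -> \sum_(k in K) f k = \sum_(v : V) v.
Proof.
move=> f_inj cardK; rewrite -(big_imset id f_inj) /=.
have -> : f @: K = [set: V].
  by apply/eqP; rewrite eqEcard subsetT cardsT card_in_imset // cardK leqnn.
by apply: eq_bigl => v; rewrite inE.
Qed.

Section NonzeroMinors.

Variables (F : fieldType) (s : nat) (N : 'M[F]_s).
Hypothesis minorN :
  forall i j k l, i != j -> k != l -> N i k * N j l != N i l * N j k.

Lemma row_eq0_uniq i j k l : i != j -> N i k = 0 -> N i l = 0 -> k = l.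
Proof.
move=> ij ik il; apply/eqP; apply: contraT => kl.
by have := minorN ij kl; rewrite ik il !mul0r eqxx.
Qed.

Lemma row_ratio_inj i j :
  i != j -> {in [set k | N j k != 0] &, injective (fun k => N i k / N j k)}.
Proof.
move=> ij k l; rewrite !inE => jk jl /eqP; rewrite eqr_div // => /eqP e.
by apply/eqP; apply: contraT => kl; have := minorN ij kl; rewrite e eqxx.
Qed.

End NonzeroMinors.

Section NonzeroMinorsFinField.

Variables (F : finFieldType) (N : 'M[F]_#|F|.+1).
Hypothesis minorN :
  forall i j k l, i != j -> k != l -> N i k * N j l != N i l * N j k.

Lemma card_row_support i j : i != j -> #|[set k | N i k != 0]| = #|F|.
Proof.
move=> ij; have ji : j != i by rewrite eq_sym.
apply/eqP; rewrite eqn_leq; apply/andP; split.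
  by rewrite -(card_in_imset (row_ratio_inj minorN ji)) max_card.
set K := [set k | N i k != 0]; have : (#|~: K| <= 1)%N.
  apply/card_le1_eqP => k l; rewrite !inE !negbK => /eqP ik /eqP il.
  exact: (row_eq0_uniq minorN ij il ik).
by have := cardsC K; rewrite card_ord; lia.
Qed.

Lemma nonzero_minors_notin_unitmx : (2 < #|F|)%N -> N \notin unitmx.
Proof.
move=> hF; pose o : 'I_#|F|.+1 := ord0.
have oM : o != ord_max by rewrite /o -val_eqE /= eq_sym -lt0n (ltnW (ltnW hF)).
set K := [set k | N o k != 0].
have cardK : #|K| = #|F| := card_row_support oM.
(* Entries with [N o k = 0] contribute nothing since [0^-1 = 0]. *)
pose w := \col_k (N o k)^-1.
have Nw : N *m w = 0.
  apply/colP => i; rewrite !mxE.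
  transitivity (\sum_(k in K) N i k / N o k).
    rewrite [RHS]big_mkcond; apply: eq_bigr => k _; rewrite mxE inE.
    by case: ifPn => //; rewrite negbK => /eqP ->; rewrite invr0 mulr0.
  have [-> | io] := eqVneq i o.
    rewrite (eq_bigr (fun _ => 1)) => [|k]; last by rewrite inE => /mulfV.
    by rewrite sumr_const cardK natr_card_eq0.
  by rewrite (sum_in_inj_card (row_ratio_inj minorN io)) ?sum_finField_eq0.
have [k kK] : exists k, k \in K by apply/card_gt0P; rewrite cardK; lia.
apply: contraL kK => Nu; rewrite inE negbK -invr_eq0.
have := congr1 (fun v : 'cV_#|F|.+1 => v k 0) (mulKmx Nu w).
by rewrite Nw mulmx0 !mxE => <-.
Qed.

End NonzeroMinorsFinField.

Local Close Scope ring_scope.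

Theorem corollary2p25 (F : finFieldType) :
  2 < #|F| ->
  ~ exists M : 'M[F]_(#|F|.+1), linear_AONT #|F|.-1 M.
Proof.
move=> hF [M AM].
have AinvM : linear_AONT 2 (invmx M) by apply: linear_AONT_invmx AM; lia.
have := nonzero_minors_notin_unitmx (linear_AONT2_minor AinvM) hF.
by case: AinvM => ->.
Qed.
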